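(* Let $V$ be a Lévy measure. Set $\mathcal{A}_{sym}=\emptyset$ if $V$ is symmetric and $\mathcal{A}_{sym}=\{1\}$ otherwise. Let $0<p\le q\le2$, $\mathcal{A}=\{p,q\}\cup\mathcal{A}_{sym}$, $p_{\min}=\min\mathcal{A}$, $p_{\max}=\max\mathcal{A}$, and assume $V\in\mathscr{M}(p_{\min},p_{\max})$. Define $g(\omega)=\int_{\mathbb{R}\setminus\{0\}}\left(\mathrm{e}^{\mathrm{j}\omega a}-1-\mathrm{j}\omega a\mathbb{1}_{|a|<1}\right)V(\mathrm{d}a)$. Then there exist constants $\kappa_1,\kappa_2\ge0$ such that for all $\omega\in\mathbb{R}$, $|g(\omega)|\le\kappa_1|\omega|^{p_{\min}}+\kappa_2|\omega|^{p_{\max}}$.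
   Context: A Lévy measure is a Radon measure $V$ on $\mathbb{R}\setminus\{0\}$ with $\int\min(1,a^2)V(\mathrm{d}a)<\infty$; it is symmetric if $V(B)=V(-B)$ for all Borel $B$. $\mathscr{M}(p,q)$ is the set of Radon measures $V$ on $\mathbb{R}\setminus\{0\}$ with $\int_{0<|a|<1}|a|^qV(\mathrm{d}a)<\infty$ and $\int_{|a|\ge1}|a|^pV(\mathrm{d}a)<\infty$. *)

(* Measures on R \ {0} are modelled as Borel
   measures on R (the canonical Borel sigma-algebra of a realType) that
   do not charge the origin. *)
From HB Require Import structures.
From mathcomp Require Import all_boot all_order all_algebra.
From mathcomp Require Import all_classical all_reals all_analysis.
Set Implicit Arguments. Unset Strict Implicit. Unset Printing Implicit Defensive.
Import Order.TTheory GRing.Theory Num.Theory.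
Import numFieldNormedType.Exports.
Local Open Scope classical_set_scope.
Local Open Scope ring_scope.

Definition Rstar (R : realType) : set R := [set~ 0].
Arguments Rstar R : clear implicits.

Definition radon_on_Rstar (R : realType) (V : {measure set R -> \bar R}) : Prop :=
  V [set 0] = 0%E /\
  forall K : set R, compact K -> K `<=` Rstar R -> (V K < +oo)%E.

Definition levy_measure (R : realType) (V : {measure set R -> \bar R}) : Prop :=
  radon_on_Rstar V /\
  (\int[V]_(a in Rstar R) (Num.min 1 (a ^+ 2))%:E < +oo)%E.

Definition symmetric_measure (R : realType) (V : {measure set R -> \bar R}) : Prop :=
  forall B : set R, measurable B -> V B = V [set - x | x in B].

Definition M_class (R : realType) (p q : R) (V : {measure set R -> \bar R}) : Prop :=
  radon_on_Rstar V /\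
  (\int[V]_(a in [set a : R | (0 < `|a| < 1)%R]) (`|a| `^ q)%:E < +oo)%E /\
  (\int[V]_(a in [set a : R | (1 <= `|a|)%R]) (`|a| `^ p)%:E < +oo)%E.

(* p_min = min ({p,q} u A_sym), p_max = max ({p,q} u A_sym), with p <= q *)
Definition pmin (R : realType) (sym : Prop) (p : R) : R :=
  if `[< sym >] then p else Num.min p 1.
Definition pmax (R : realType) (sym : Prop) (q : R) : R :=
  if `[< sym >] then q else Num.max q 1.

(* g(w) = int (e^{j w a} - 1 - j w a 1_{|a|<1}) V(da), split into real
   and imaginary parts. *)
Definition g_re (R : realType) (V : {measure set R -> \bar R}) (w : R) : R :=
  Rintegral V (Rstar R) (fun a => cos (w * a) - 1).
Definition g_im (R : realType) (V : {measure set R -> \bar R}) (w : R) : R :=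
  Rintegral V (Rstar R)
    (fun a => sin (w * a) - w * a * (\1_[set x : R | `|x| < 1] a)).
Definition abs_g (R : realType) (V : {measure set R -> \bar R}) (w : R) : R :=
  Num.sqrt (g_re V w ^+ 2 + g_im V w ^+ 2).

From HB Require Import structures.
From mathcomp Require Import all_boot all_order all_algebra.
From mathcomp Require Import all_classical all_reals all_analysis.
From mathcomp Require Import ring lra measurable_realfun.
Import Order.TTheory GRing.Theory Num.Theory.
Import numFieldNormedType.Exports.
Local Open Scope classical_set_scope.
Local Open Scope ring_scope.

(* Split the jumps into small (0 < |a| < 1) and large (|a| >= 1) ones.  On
   the small ones the integrands of g are O(|w a|^pmax), on the large ones
   O(|w a|^pmin); the exponents fit because cos x - 1 = O(|x|^r) for every
   r in (0, 2], sin x - x = O(|x|^r) for r in [1, 2] and sin x = O(|x|^r)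
   for r in (0, 1].  The moment conditions of M(pmin, pmax) then make both
   parts of g integrable with the required bound.  When V is symmetric the
   imaginary part vanishes because its integrand is odd, which is why the
   exponent 1 is only needed for nonsymmetric V. *)

Section trig_inequalities.
Context {R : realType}.
Implicit Types x r : R.

Lemma norm_sin_le x : `|sin x| <= `|x|.
Proof.
wlog x0 : x / 0 <= x.
  move=> H; have [/H//|x0] := leP 0 x.
  by have := H (- x); rewrite sinN !normrN; apply; rewrite oppr_ge0 ltW.
have [c _] := @MVT_segment R sin cos 0 x x0 (fun y _ => is_derive_sin y)
  (continuous_subspaceT (@continuous_sin R)).
by rewrite sin0 !subr0 => ->; rewrite normrM ler_piMl// cos_max.
Qed.

Lemma one_sub_cos_le x : 1 - cos x <= x ^+ 2 / 2.
Proof.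
have -> : x = (x / 2) *+ 2 by rewrite -mulr_natr mulfVK// pnatr_eq0.
rewrite cos_mulr2n; set y := x / 2.
have sin2_le : sin y ^+ 2 <= y ^+ 2.
  rewrite -(real_normK (num_real y)) -(real_normK (num_real (sin y))).
  by rewrite ler_pXn2r ?nnegrE// norm_sin_le.
have -> : (y *+ 2) ^+ 2 / 2 = 2 * y ^+ 2.
  by rewrite -mulr_natr; field.
have := cos2Dsin2 y; lra.
Qed.

Lemma norm_sin_sub_id_le x : `|sin x - x| <= `|x| ^+ 3 / 2.
Proof.
wlog x0 : x / 0 <= x.
  move=> H; have [/H//|x0] := leP 0 x.
  by have := H (- x); rewrite sinN -opprD !normrN; apply; rewrite oppr_ge0 ltW.
have der y : y \in `]0, x[ -> is_derive y 1 (fun t => sin t - t) (cos y - 1).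
  by move=> _; apply: is_deriveB.
have cont : {within `[0, x], continuous (fun t => sin t - t)}.
  apply: continuous_subspaceT => t.
  by apply: continuousB; [exact: continuous_sin|exact: cvg_id].
have [c] := @MVT_segment R _ _ 0 x x0 der cont.
rewrite in_itv /= sin0 !subr0 => /andP[c0 cx] ->.
rewrite normrM (ger0_norm x0) ler0_norm ?subr_le0 ?cos_le1// opprB.
have c2x2 : c ^+ 2 <= x ^+ 2 by rewrite ler_pXn2r ?nnegrE ?(ltW c0) ?(ltW cx).
apply: le_trans (ler_wpM2r x0 (one_sub_cos_le c)) _.
have -> : x ^+ 3 / 2 = x ^+ 2 / 2 * x by rewrite exprSr mulrAC.
by apply: ler_wpM2r => //; lra.
Qed.

Lemma powR_le_powR_small {x r s} : 0 <= x -> x <= 1 -> 0 < r -> r <= s ->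
  x `^ s <= x `^ r.
Proof.
move=> x0 x1 r0 rs; have [->|xn0] := eqVneq x 0.
  by rewrite !powR0 // gt_eqF // (lt_le_trans r0 rs).
by apply: ger_powR => //; rewrite lt_neqAle eq_sym xn0 x0 x1.
Qed.

Lemma powR_ge1 {x r} : 1 <= x -> 0 <= r -> 1 <= x `^ r.
Proof. by move=> x1 r0; rewrite -(powRr0 x); exact: ler_powR. Qed.

Lemma norm_cos_sub1_le_powR x r : 0 < r -> r <= 2 ->
  `|cos x - 1| <= 2 * `|x| `^ r.
Proof.
move=> r0 r2; rewrite ler0_norm ?subr_le0 ?cos_le1// opprB.
have [x1|x1] := leP `|x| 1.
  have := powR_le_powR_small (normr_ge0 x) x1 r0 r2.
  rewrite powR_mulrn ?real_normK ?num_real//.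
  have := one_sub_cos_le x; have := powR_ge0 `|x| r; have := sqr_ge0 x; lra.
have := powR_ge1 (ltW x1) (ltW r0); have := cos_geN1 x; lra.
Qed.

Lemma norm_sin_le_powR x r : 0 < r -> r <= 1 -> `|sin x| <= `|x| `^ r.
Proof.
move=> r0 r1; have [x1|x1] := leP `|x| 1.
  apply: le_trans (norm_sin_le x) _; rewrite -{1}(powRr1 (normr_ge0 x)).
  exact: powR_le_powR_small.
exact: le_trans (sin_max x) (powR_ge1 (ltW x1) (ltW r0)).
Qed.

Lemma norm_sin_sub_id_le_powR x r : 1 <= r -> r <= 2 ->
  `|sin x - x| <= 2 * `|x| `^ r.
Proof.
move=> r1 r2; have x0 := normr_ge0 x.
have [x1|x1] := leP `|x| 1.
  have := powR_le_powR_small x0 x1 (lt_le_trans ltr01 r1) r2.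
  rewrite powR_mulrn// => x2_le.
  have : `|x| ^+ 3 <= `|x| ^+ 2 by rewrite exprSr ler_piMr// sqr_ge0.
  have := norm_sin_sub_id_le x; have := sqr_ge0 `|x|; lra.
apply: le_trans (ler_normB _ _) _.
have := norm_sin_le x; have := le1r_powR (ltW x1) r1; lra.
Qed.

End trig_inequalities.

Lemma pmin_pmax_bounds {R : realType} (S : Prop) {p q : R} :
  0 < p -> p <= q -> q <= 2 ->
  [/\ 0 < pmin S p, pmin S p <= pmax S q, pmax S q <= 2 &
      ~ S -> pmin S p <= 1 <= pmax S q].
Proof.
rewrite /pmin /pmax; case: (asboolP S) => [s|ns] p0 pq q2.
  by split => // /(_ s).
have := ge_min p 1; have := le_max q 1.
rewrite /Order.min /Order.max /=.
by case: (ltP p 1); case: (ltP q 1) => *; split => //; lra.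
Qed.

Definition small_jumps (R : realType) := [set a : R | 0 < `|a| < 1].
Definition large_jumps (R : realType) := [set a : R | 1 <= `|a|].

Section jump_sets.
Variable R : realType.

Lemma measurable_normr_itv (i : interval R) : measurable [set x : R | `|x| \in i].
Proof.
have := @normr_measurable R setT measurableT _ (measurable_itv i).
by rewrite setTI.
Qed.

Lemma measurable_small_jumps : measurable (small_jumps R).
Proof. exact: measurable_normr_itv `]0, 1[. Qed.

Lemma measurable_large_jumps : measurable (large_jumps R).
Proof.
have := measurable_normr_itv `[1, +oo[; congr measurable.
by apply/seteqP; split => x /=; rewrite in_itv /= andbT.
Qed.

Lemma measurable_Rstar : measurable (Rstar R).
Proof. exact: measurableC (measurable_set1 _). Qed.

Lemma Rstar_small_large_jumps : Rstar R = small_jumps R `|` large_jumps R.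
Proof.
apply/seteqP; split => x /=.
  move=> /eqP x0; have [x1|x1] := ltP `|x| 1; [left|right] => //.
  by apply/andP; split; rewrite ?normr_gt0.
rewrite /small_jumps /large_jumps /= => -[/andP[+ _]|+] x0.
  by rewrite x0 normr0 ltxx.
by rewrite x0 normr0 ler10.
Qed.

Lemma disjoint_small_large_jumps : [disjoint small_jumps R & large_jumps R].
Proof.
by apply/disj_setPS => x [/andP[_ x1] /(lt_le_trans x1)]; rewrite ltxx.
Qed.

End jump_sets.

Definition small_moment {R : realType} (V : {measure set R -> \bar R}) (r : R) :=
  fine (\int[V]_(a in small_jumps R) (`|a| `^ r)%:E).
Definition large_moment {R : realType} (V : {measure set R -> \bar R}) (r : R) :=
  fine (\int[V]_(a in large_jumps R) (`|a| `^ r)%:E).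

Section dominated_by_moments.
Local Open Scope ereal_scope.
Variables (R : realType) (V : {measure set R -> \bar R}).

Lemma measurable_powR_normr (D : set R) (r : R) :
  measurable_fun D (fun x : R => `|x| `^ r)%R.
Proof.
apply: measurable_funTS.
exact: measurableT_comp (measurable_powR r) (@normr_measurable R setT).
Qed.

Lemma integral_normr_le_scaled_powR (g : R -> R) (D : set R) (c r : R) :
  measurable D -> measurable_fun D g -> (0 <= c)%R ->
  \int[V]_(a in D) (`|a| `^ r)%:E < +oo ->
  (forall a, D a -> `|g a| <= c * `|a| `^ r)%R ->
  \int[V]_(a in D) (`|g a|)%:E <= (c * fine (\int[V]_(a in D) (`|a| `^ r)%:E))%:E.
Proof.
move=> mD mg c0 fin g_le.
have mpow : measurable_fun D (fun a => (`|a| `^ r)%:E).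
  by apply/measurable_EFinP; exact: measurable_powR_normr.
have -> : (c * fine (\int[V]_(a in D) (`|a| `^ r)%:E))%:E =
          \int[V]_(a in D) (c%:E * (`|a| `^ r)%:E).
  by rewrite ge0_integralZl_EFin// EFinM fineK// ge0_fin_numE// integral_ge0.
apply: (ge0_le_integral V mD).
- by move=> x _; rewrite lee_fin.
- by apply/measurable_EFinP; exact: measurableT_comp (@normr_measurable R setT) mg.
- exact: emeasurable_funM.
- by move=> x /g_le; rewrite -EFinM lee_fin.
Qed.

Variables (P Q : R) (f : R -> R) (al be : R).
Hypothesis small_fin : \int[V]_(a in small_jumps R) (`|a| `^ Q)%:E < +oo.
Hypothesis large_fin : \int[V]_(a in large_jumps R) (`|a| `^ P)%:E < +oo.
Hypotheses (mf : measurable_fun setT f) (al0 : (0 <= al)%R) (be0 : (0 <= be)%R).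
Hypothesis f_small : forall a, small_jumps R a -> (`|f a| <= al * `|a| `^ Q)%R.
Hypothesis f_large : forall a, large_jumps R a -> (`|f a| <= be * `|a| `^ P)%R.

Lemma integral_Rstar_normr_le :
  \int[V]_(a in Rstar R) (`|f a|)%:E <=
  (al * small_moment V Q + be * large_moment V P)%:E.
Proof.
have mnormf D : measurable_fun D (fun a => (`|f a|)%:E).
  by apply/measurable_EFinP/measurable_funTS; exact: measurableT_comp mf.
rewrite Rstar_small_large_jumps (ge0_integral_setU V (measurable_small_jumps R)
  (measurable_large_jumps R)) //; last exact: disjoint_small_large_jumps.
rewrite EFinD; apply: leeD; apply: integral_normr_le_scaled_powR => //.
- exact: measurable_small_jumps.
- exact: measurable_funTS.
- exact: measurable_large_jumps.
- exact: measurable_funTS.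
Qed.

Lemma integrable_Rstar_dominated : V.-integrable (Rstar R) (EFin \o f).
Proof.
apply/integrableP; split; first exact/measurable_EFinP/measurable_funTS.
exact: le_lt_trans integral_Rstar_normr_le (ltry _).
Qed.

Lemma normr_Rintegral_Rstar_le :
  (`|Rintegral V (Rstar R) f| <= al * small_moment V Q + be * large_moment V P)%R.
Proof.
have intf := integrable_Rstar_dominated.
have normf_ge0 : 0 <= \int[V]_(a in Rstar R) (`|f a|)%:E.
  by apply: integral_ge0 => x _; rewrite lee_fin.
apply: le_trans (le_normr_Rintegral (measurable_Rstar R) intf) _.
rewrite -lee_fin /Rintegral fineK ?integral_Rstar_normr_le// ge0_fin_numE//.
exact: le_lt_trans integral_Rstar_normr_le (ltry _).
Qed.

End dominated_by_moments.

Lemma Rintegral_odd_eq0 (R : realType) (V : {measure set R -> \bar R})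
    (D : set R) (f : R -> R) :
  symmetric_measure V -> measurable D -> -%R @^-1` D = D ->
  measurable_fun setT f -> V.-integrable D (EFin \o f) ->
  (forall x, f (- x) = - f x) -> Rintegral V D f = 0.
Proof.
move=> symV mD DN mf intf fodd.
have mN : measurable_fun setT (-%R : R -> R) by exact: oppr_measurable.
have mEf : measurable_fun setT (EFin \o f) by exact/measurable_EFinP.
have fN : (EFin \o f) \o -%R = (fun x => - (EFin \o f) x)%E.
  by apply/funext => x /=; rewrite fodd EFinN.
have intfN : V.-integrable (-%R @^-1` D) ((EFin \o f) \o -%R).
  by rewrite DN fN; exact: integrableN.
(* Symmetry of V turns the change of variables x |-> -x into
   \int_D f = \int_D (- f) = - \int_D f. *)
have := integral_pushforward mN mEf intfN mD.
rewrite (eq_measure_integral V); last first.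
  move=> A mA _; rewrite /pushforward (symV A mA); congr (V _).
  apply/seteqP; split => x /=; first by exists (- x); rewrite ?opprK.
  by move=> [y Ay <-]; rewrite opprK.
rewrite DN fN integralN; last first.
  by rewrite fin_num_adde_defl// fin_numN integrable_neg_fin_num.
move=> intE; rewrite /Rintegral (_ : \int[V]_(x in D) (f x)%:E = 0)%E //.
move: intE; case: (\int[V]_(x in D) (EFin \o f) x)%E => [r||] //= /eqP.
by rewrite eqe => /eqP r_eq; congr EFin; lra.
Qed.

Lemma sqrt_sqrD_le_normD {R : realType} (a b : R) :
  Num.sqrt (a ^+ 2 + b ^+ 2) <= `|a| + `|b|.
Proof.
rewrite -[X in _ <= X]ger0_norm ?addr_ge0// -sqrtr_sqr ler_wsqrtr//.
rewrite sqrrD -(real_normK (num_real a)) -(real_normK (num_real b)).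
have := mulr_ge0 (normr_ge0 a) (normr_ge0 b); rewrite -mulr_natr; lra.
Qed.

Section levy_exponent_bounds.
Context {R : realType} {V : {measure set R -> \bar R}} {P Q : R}.
Hypothesis small_fin : (\int[V]_(a in small_jumps R) (`|a| `^ Q)%:E < +oo)%E.
Hypothesis large_fin : (\int[V]_(a in large_jumps R) (`|a| `^ P)%:E < +oo)%E.
Hypotheses (P_gt0 : 0 < P) (PQ : P <= Q) (Q_le2 : Q <= 2).
Variable w : R.

Let Q_gt0 : 0 < Q. Proof. exact: lt_le_trans PQ. Qed.

Let measurable_scale : measurable_fun setT (fun a : R => w * a).
Proof. exact: measurable_funM. Qed.

Let powR_normr_scale (a r : R) : `|w * a| `^ r = `|w| `^ r * `|a| `^ r.
Proof. by rewrite normrM powRM. Qed.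

Lemma normr_g_re_le :
  `|g_re V w| <= 2 * `|w| `^ Q * small_moment V Q + 2 * `|w| `^ P * large_moment V P.
Proof.
apply: normr_Rintegral_Rstar_le => //.
- apply: measurable_funB => //.
  exact: measurableT_comp (continuous_measurable_fun (@continuous_cos R)) _.
- by move=> a _; rewrite -mulrA -powR_normr_scale norm_cos_sub1_le_powR.
- move=> a _; rewrite -mulrA -powR_normr_scale norm_cos_sub1_le_powR//.
  exact: le_trans Q_le2.
Qed.

Let im_integrand a := sin (w * a) - w * a * \1_[set x : R | `|x| < 1] a.

Let measurable_im_integrand : measurable_fun setT im_integrand.
Proof.
apply: measurable_funB.
  exact: measurableT_comp (continuous_measurable_fun (@continuous_sin R)) _.
apply: measurable_funM => //; apply: measurable_indic.
exact: measurable_normr_itv `]-oo, 1[.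
Qed.

Let im_integrand_small a : small_jumps R a -> im_integrand a = sin (w * a) - w * a.
Proof. by move=> /andP[_ a1]; rewrite /im_integrand indicE mem_set ?mulr1. Qed.

Let im_integrand_large a : large_jumps R a -> im_integrand a = sin (w * a).
Proof.
move=> a1; rewrite /im_integrand indicE memNset ?mulr0 ?subr0//=.
by move=> /(le_lt_trans a1); rewrite ltxx.
Qed.

Lemma normr_g_im_le : P <= 1 -> 1 <= Q ->
  `|g_im V w| <= 2 * `|w| `^ Q * small_moment V Q + `|w| `^ P * large_moment V P.
Proof.
move=> P_le1 Q_ge1; rewrite (_ : g_im V w = Rintegral V (Rstar R) im_integrand)//.
apply: normr_Rintegral_Rstar_le => //.
- move=> a /im_integrand_small ->.
  by rewrite -mulrA -powR_normr_scale norm_sin_sub_id_le_powR.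
- by move=> a /im_integrand_large ->; rewrite -powR_normr_scale norm_sin_le_powR.
Qed.

Lemma g_im_symmetric_eq0 : symmetric_measure V -> g_im V w = 0.
Proof.
move=> symV; apply: Rintegral_odd_eq0 => //.
- exact: measurable_Rstar.
- apply/seteqP; split => x /=; rewrite /Rstar /=.
    by move=> Nx x0; apply: Nx; rewrite x0 oppr0.
  by move=> x0 /eqP; rewrite oppr_eq0 => /eqP.
- apply: (@integrable_Rstar_dominated R V P Q im_integrand (2 * `|w| `^ 2) 1
    small_fin large_fin) => //.
  + move=> a /[dup] /im_integrand_small -> /andP[_ a1].
    have le_sqr : `|sin (w * a) - w * a| <= 2 * `|w * a| `^ 2.
      by apply: norm_sin_sub_id_le_powR; rewrite ?ler1n.
    apply: le_trans le_sqr _; rewrite powR_normr_scale mulrA ler_wpM2l//.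
    exact: powR_le_powR_small (normr_ge0 a) (ltW a1) Q_gt0 Q_le2.
  + move=> a /[dup] /im_integrand_large -> a1; rewrite mul1r.
    exact: le_trans (sin_max _) (powR_ge1 a1 (ltW P_gt0)).
- move=> x; rewrite mulrN sinN !indicE.
  have -> : (- x \in [set y : R | `|y| < 1]) = (x \in [set y : R | `|y| < 1]).
    by apply/idP/idP; rewrite !in_setE /= normrN.
  lra.
Qed.

End levy_exponent_bounds.

Theorem corollary3p13 (R : realType) (V : {measure set R -> \bar R})
  (p q : R) :
  levy_measure V ->
  0 < p -> p <= q -> q <= 2 ->
  M_class (pmin (symmetric_measure V) p) (pmax (symmetric_measure V) q) V ->
  exists k1 k2 : R, 0 <= k1 /\ 0 <= k2 /\
    forall w : R,
      abs_g V w <= k1 * `|w| `^ (pmin (symmetric_measure V) p)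
                   + k2 * `|w| `^ (pmax (symmetric_measure V) q).
Proof.
move=> _ p_gt0 pq q_le2 [_ [small_fin large_fin]].
set P := pmin _ p in small_fin large_fin *; set Q := pmax _ q in small_fin large_fin *.
have [P_gt0 PQ Q_le2 asym_bounds] := pmin_pmax_bounds (symmetric_measure V) p_gt0 pq q_le2.
have sm_ge0 : 0 <= small_moment V Q by rewrite fine_ge0// integral_ge0.
have lm_ge0 : 0 <= large_moment V P by rewrite fine_ge0// integral_ge0.
exists (3 * large_moment V P), (4 * small_moment V Q).
do 2 (split; first exact: mulr_ge0); move=> w.
have re_le := normr_g_re_le small_fin large_fin P_gt0 PQ Q_le2 w.
have im_le : `|g_im V w| <= 2 * `|w| `^ Q * small_moment V Q + `|w| `^ P * large_moment V P.
  have [symV|asymV] := pselect (symmetric_measure V).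
    rewrite (g_im_symmetric_eq0 small_fin large_fin P_gt0 PQ Q_le2 w symV) normr0.
    by rewrite addr_ge0// !mulr_ge0// powR_ge0.
  by have /andP[P_le1 Q_ge1] := asym_bounds asymV; exact: normr_g_im_le.
apply: le_trans (sqrt_sqrD_le_normD _ _) _.
have := mulr_ge0 (powR_ge0 `|w| P) lm_ge0; have := mulr_ge0 (powR_ge0 `|w| Q) sm_ge0.
lra.
Qed.
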